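(* Let $\mathscr{V}$ be a braided monoidal category, $A$ a monoid and $B$ a bimonoid in $\mathscr{V}$, regarded as a comonoid $(B,\delta_B,\varepsilon_B)$ in the monoidal 2-category $\mathrm{Mon}\mathscr{V}$. A pair $(\gamma,\tau)$, with $\gamma\colon A\to A\otimes B$ and $\tau\colon I\to A\otimes B\otimes B$ morphisms of $\mathscr{V}$, is a twisted right coaction of $B$ on $A$ if and only if it is a normal lax right coaction of the comonoid $B$ on the object $A$ in $\mathrm{Mon}\mathscr{V}$.
   Context: Associativity and unit constraints are suppressed; $c$ is the braiding. For monoids $M,N$, $M\otimes N$ is a monoid with multiplication $(\mu_M\otimes\mu_N)\circ(1_M\otimes c_{N,M}\otimes 1_N)$ and unit $\eta_M\otimes\eta_N$. For a monoid $M$ and $u\colon X\to M$, $v\colon Y\to M$, $u\bullet v=\mu_M\circ(u\otimes v)$. A bimonoid is a monoid and comonoid whose comultiplication and counit are monoid morphisms. The 2-category $\mathrm{Mon}\mathscr{V}$: objects are monoids in $\mathscr{V}$, 1-cells are monoid morphisms, and a 2-cell $\xi\colon f\Rightarrow g$ between $f,g\colon M\to N$ is a morphism $\xi\colon I\to N$ with $\xi\bullet f=g\bullet\xi$ (as morphisms $M\to N$). Vertical composite of $\xi$ followed by $\zeta\colon g\Rightarrow h$ is $\zeta\bullet\xi$; the identity 2-cell on $f\colon M\to N$ is $\eta_N$; whiskering $\xi$ by a 1-cell $h\colon N\to L$ on the codomain side gives $h\circ\xi$, and whiskering by a 1-cell $k\colon L\to M$ on the domain side gives $\xi$. It is monoidal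 via the tensor product of monoids above, $f\otimes g$ on 1-cells and $\xi\otimes\xi'$ on 2-cells. A twisted right coaction of $B$ on $A$: a monoid morphism $\gamma\colon A\to A\otimes B$ and $\tau\colon I\to A\otimes B\otimes B$ with (counitality) $(1_A\otimes\varepsilon_B)\circ\gamma=1_A$; ($\tau$-coassociativity) $\tau\bullet((\gamma\otimes 1_B)\circ\gamma)=((1_A\otimes\delta_B)\circ\gamma)\bullet\tau$; (2-cocyclicity) $((1_A\otimes\delta_B\otimes 1_B)\circ\tau)\bullet(\tau\otimes\eta_B)=((1_{A\otimes B}\otimes\delta_B)\circ\tau)\bullet((\gamma\otimes 1_{B\otimes B})\circ\tau)$; (normality) $(1_{A\otimes B}\otimes\varepsilon_B)\circ\tau=\eta_A\otimes\eta_B=(1_A\otimes\varepsilon_B\otimes 1_B)\circ\tau$. A normal lax right coaction of a comonoid $(B,\delta,\varepsilon)$ on an object $A$ in a monoidal 2-category consists of a 1-cell $\gamma\colon A\to A\otimes B$ with $(1_A\otimes\varepsilon)\circ\gamma=1_A$ (the unit constraint 2-cell being an identity), and a 2-cell $\tau\colon(\gamma\otimes 1_B)\circ\gamma\Rightarrow(1_A\otimes\delta)\circ\gamma$, such that the two composite 2-cells $(\gamma\otimes 1_B\otimes 1_B)(\gamma\otimes 1_B)\gamma\Rightarrow(1_A\otimes\delta\otimes 1_B)(1_A\otimes\delta)\gamma=(1_A\otimes 1_B\otimes\delta)(1_A\otimes\delta)\gamma$, namely $(1_A\otimes\delta\otimes 1_B)\tau$ after $(\tau\otimes 1_B)\gamma$,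 and $(1_A\otimes 1_B\otimes\delta)\tau$ after $(\gamma\otimes 1_B\otimes 1_B)\tau$, are equal, and such that the whiskered 2-cells $(1_A\otimes\varepsilon\otimes 1_B)\tau$ and $(1_A\otimes 1_B\otimes\varepsilon)\tau$ are identity 2-cells of $\gamma$. *)

Set Implicit Arguments.
Unset Strict Implicit.

Record BMC := {
  ob :> Type;
  hom : ob -> ob -> Type;
  comp : forall a b c : ob, hom b c -> hom a b -> hom a c;
  idm : forall a : ob, hom a a;
  tens : ob -> ob -> ob;
  tensm : forall a b c d : ob, hom a b -> hom c d -> hom (tens a c) (tens b d);
  unit : ob;
  assoc : forall a b c : ob, hom (tens (tens a b) c) (tens a (tens b c));
  assoc_inv : forall a b c : ob, hom (tens a (tens b c)) (tens (tens a b) c);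
  lunit : forall a : ob, hom (tens unit a) a;
  lunit_inv : forall a : ob, hom a (tens unit a);
  runit : forall a : ob, hom (tens a unit) a;
  runit_inv : forall a : ob, hom a (tens a unit);
  braid : forall a b : ob, hom (tens a b) (tens b a);
  braid_inv : forall a b : ob, hom (tens b a) (tens a b);

  comp_idl : forall a b (f : hom a b), comp (idm b) f = f;
  comp_idr : forall a b (f : hom a b), comp f (idm a) = f;
  comp_assoc : forall a b c d (f : hom a b) (g : hom b c) (h : hom c d),
      comp h (comp g f) = comp (comp h g) f;
  tens_id : forall a b, tensm (idm a) (idm b) = idm (tens a b);
  tens_comp : forall a1 b1 c1 a2 b2 c2 (f1 : hom a1 b1) (g1 : hom b1 c1)
      (f2 : hom a2 b2) (g2 : hom b2 c2),
      tensm (comp g1 f1) (comp g2 f2) = comp (tensm g1 g2) (tensm f1 f2);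
  assoc_iso1 : forall a b c, comp (assoc_inv a b c) (assoc a b c) = idm _;
  assoc_iso2 : forall a b c, comp (assoc a b c) (assoc_inv a b c) = idm _;
  lunit_iso1 : forall a, comp (lunit_inv a) (lunit a) = idm _;
  lunit_iso2 : forall a, comp (lunit a) (lunit_inv a) = idm _;
  runit_iso1 : forall a, comp (runit_inv a) (runit a) = idm _;
  runit_iso2 : forall a, comp (runit a) (runit_inv a) = idm _;
  braid_iso1 : forall a b, comp (braid_inv a b) (braid a b) = idm _;
  braid_iso2 : forall a b, comp (braid a b) (braid_inv a b) = idm _;
  assoc_nat : forall a a' b b' c c' (f : hom a a') (g : hom b b') (h : hom c c'),
      comp (assoc a' b' c') (tensm (tensm f g) h)
      = comp (tensm f (tensm g h)) (assoc a b c);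
  lunit_nat : forall a a' (f : hom a a'),
      comp (lunit a') (tensm (idm unit) f) = comp f (lunit a);
  runit_nat : forall a a' (f : hom a a'),
      comp (runit a') (tensm f (idm unit)) = comp f (runit a);
  braid_nat : forall a a' b b' (f : hom a a') (g : hom b b'),
      comp (braid a' b') (tensm f g) = comp (tensm g f) (braid a b);
  pentagon : forall w x y z,
      comp (assoc w x (tens y z)) (assoc (tens w x) y z)
      = comp (comp (tensm (idm w) (assoc x y z)) (assoc w (tens x y) z))
             (tensm (assoc w x y) (idm z));
  triangle : forall x y,
      comp (tensm (idm x) (lunit y)) (assoc x unit y) = tensm (runit x) (idm y);
  hexagon1 : forall x y z,
      comp (comp (assoc y z x) (braid x (tens y z))) (assoc x y z)
      = comp (comp (tensm (idm y) (braid x z)) (assoc y x z))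
             (tensm (braid x y) (idm z));
  hexagon2 : forall x y z,
      comp (comp (assoc_inv z x y) (braid (tens x y) z)) (assoc_inv x y z)
      = comp (comp (tensm (braid x z) (idm y)) (assoc_inv x z y))
             (tensm (idm x) (braid y z))
}.

Arguments hom {_}.
Arguments comp {_ a b c}.
Arguments idm {_}.
Arguments tens {_}.
Arguments tensm {_ a b c d}.
Arguments unit {_}.
Arguments assoc {_}.
Arguments assoc_inv {_}.
Arguments lunit {_}.
Arguments lunit_inv {_}.
Arguments runit {_}.
Arguments runit_inv {_}.
Arguments braid {_}.
Arguments braid_inv {_}.

Declare Scope cat_scope.
Delimit Scope cat_scope with cat.
Open Scope cat_scope.
Infix "∘" := comp (at level 40, left associativity) : cat_scope.
Infix "⊗" := tens (at level 34, left associativity) : cat_scope.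
Infix "⊠" := tensm (at level 34, left associativity) : cat_scope.

Section MonV.
Variable C : BMC.

Record mdata := MData {
  mcar :> ob C;
  mmul : hom (mcar ⊗ mcar) mcar;
  munit : hom unit mcar
}.

(* the middle-four interchange (a⊗b)⊗(c⊗d) -> (a⊗c)⊗(b⊗d), i.e. 1⊗c_{b,c}⊗1
   with the associativity constraints inserted *)
Definition midx (a b c d : ob C) : hom ((a ⊗ b) ⊗ (c ⊗ d)) ((a ⊗ c) ⊗ (b ⊗ d)) :=
  assoc_inv a c (b ⊗ d) ∘ (idm a ⊠ assoc c b d) ∘ (idm a ⊠ (braid b c ⊠ idm d))
  ∘ (idm a ⊠ assoc_inv b c d) ∘ assoc a b (c ⊗ d).

Definition mtens (M N : mdata) : mdata :=
  @MData (M ⊗ N) ((mmul M ⊠ mmul N) ∘ midx M N M N)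
        ((munit M ⊠ munit N) ∘ lunit_inv unit).

Definition munitobj : mdata := @MData unit (lunit unit) (idm unit).

Definition is_monoid (M : mdata) : Prop :=
  mmul M ∘ (mmul M ⊠ idm M) = mmul M ∘ (idm M ⊠ mmul M) ∘ assoc M M M
  /\ mmul M ∘ (munit M ⊠ idm M) = lunit M
  /\ mmul M ∘ (idm M ⊠ munit M) = runit M.

Definition is_comonoid (X : ob C) (delta : hom X (X ⊗ X)) (eps : hom X unit) : Prop :=
  assoc X X X ∘ (delta ⊠ idm X) ∘ delta = (idm X ⊠ delta) ∘ delta
  /\ lunit X ∘ (eps ⊠ idm X) ∘ delta = idm X
  /\ runit X ∘ (idm X ⊠ eps) ∘ delta = idm X.

Definition is_mon_mor (M N : mdata) (f : hom M N) : Prop :=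
  f ∘ mmul M = mmul N ∘ (f ⊠ f) /\ f ∘ munit M = munit N.

Definition is_bimonoid (B : mdata) (delta : hom B (B ⊗ B)) (eps : hom B unit) : Prop :=
  is_monoid B /\ is_comonoid delta eps
  /\ is_mon_mor (M := B) (N := mtens B B) delta
  /\ is_mon_mor (M := B) (N := munitobj) eps.

Definition bullet (M : mdata) (X Y : ob C) (u : hom X M) (v : hom Y M)
  : hom (X ⊗ Y) M := mmul M ∘ (u ⊠ v).

(* ξ : I -> N is a 2-cell f ⇒ g (f g : M -> N) iff ξ•f = g•ξ as morphisms M -> N *)
Definition is_2cell (N : mdata) (M : ob C) (f g : hom M N) (xi : hom unit N) : Prop :=
  bullet xi f ∘ lunit_inv M = bullet g xi ∘ runit_inv M.

(* vertical composite of ξ followed by ζ is ζ • ξ (as a morphism I -> N) *)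
Definition vcomp2 (N : mdata) (zeta xi : hom unit N) : hom unit N :=
  bullet zeta xi ∘ lunit_inv unit.

(* identity 2-cell on any 1-cell into N *)
Definition id2 (N : mdata) : hom unit N := munit N.

Definition whisk_cod (N L : ob C) (h : hom N L) (xi : hom unit N) : hom unit L :=
  h ∘ xi.

Definition whisk_dom (L M N : ob C) (k : hom L M) (xi : hom unit N) : hom unit N :=
  xi.

Definition tens2 (N N' : ob C) (xi : hom unit N) (xi' : hom unit N')
  : hom unit (N ⊗ N') := (xi ⊠ xi') ∘ lunit_inv unit.

(* Convention: A⊗B⊗B := (A⊗B)⊗B and A⊗B⊗B⊗B := ((A⊗B)⊗B)⊗B, with the
   corresponding (left-nested) tensor product monoid structures. *)

Section Coactions.
Variables (A B : mdata) (delta : hom B (B ⊗ B)) (eps : hom B unit).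
Variables (gamma : hom A (A ⊗ B)) (tau : hom unit ((A ⊗ B) ⊗ B)).

Let AB := mtens A B.
Let ABB := mtens AB B.
Let ABBB := mtens ABB B.

Let one_delta : hom (A ⊗ B) ((A ⊗ B) ⊗ B) := assoc_inv A B B ∘ (idm A ⊠ delta).
Let one_delta_one : hom ((A ⊗ B) ⊗ B) (((A ⊗ B) ⊗ B) ⊗ B) := one_delta ⊠ idm B.
Let one_one_delta : hom ((A ⊗ B) ⊗ B) (((A ⊗ B) ⊗ B) ⊗ B) :=
  assoc_inv (A ⊗ B) B B ∘ (idm (A ⊗ B) ⊠ delta).
Let gamma_one_one : hom ((A ⊗ B) ⊗ B) (((A ⊗ B) ⊗ B) ⊗ B) :=
  (gamma ⊠ idm B) ⊠ idm B.
Let one_eps_one : hom ((A ⊗ B) ⊗ B) (A ⊗ B) :=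
  (runit A ⊠ idm B) ∘ ((idm A ⊠ eps) ⊠ idm B).
Let one_one_eps : hom ((A ⊗ B) ⊗ B) (A ⊗ B) :=
  runit (A ⊗ B) ∘ (idm (A ⊗ B) ⊠ eps).

Definition twisted_right_coaction : Prop :=
  is_mon_mor (M := A) (N := AB) gamma
  /\ runit A ∘ (idm A ⊠ eps) ∘ gamma = idm A
  /\ bullet (M := ABB) tau ((gamma ⊠ idm B) ∘ gamma) ∘ lunit_inv A
     = bullet (M := ABB) (one_delta ∘ gamma) tau ∘ runit_inv A
  (* 2-cocyclicity, as morphisms I⊗I -> A⊗B⊗B⊗B (τ⊗η_B : I -> I⊗I -> ...) *)
  /\ bullet (M := ABBB) (one_delta_one ∘ tau) ((tau ⊠ munit B) ∘ lunit_inv unit)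
     = bullet (M := ABBB) (one_one_delta ∘ tau) (gamma_one_one ∘ tau)
  /\ one_one_eps ∘ tau = munit AB
  /\ one_eps_one ∘ tau = munit AB.

Definition normal_lax_right_coaction_MonV : Prop :=
  is_mon_mor (M := A) (N := AB) gamma
  /\ runit A ∘ (idm A ⊠ eps) ∘ gamma = idm A
  /\ is_2cell (N := ABB) ((gamma ⊠ idm B) ∘ gamma) (one_delta ∘ gamma) tau
  /\ vcomp2 (N := ABBB) (whisk_cod one_delta_one tau)
                 (whisk_dom gamma (tens2 tau (id2 B)))
     = vcomp2 (N := ABBB) (whisk_cod one_one_delta tau)
                   (whisk_cod gamma_one_one tau)
  /\ whisk_cod one_eps_one tau = id2 AB
  /\ whisk_cod one_one_eps tau = id2 AB.

End Coactions.
End MonV.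

Arguments mdata : clear implicits.
Arguments MData {C} mcar mmul munit.
Arguments is_bimonoid {C}.
Arguments twisted_right_coaction {C}.
Arguments normal_lax_right_coaction_MonV {C}.

From Stdlib Require Import Setoid.

(* The two notions agree clause by clause. The 2-cell condition on [tau] is
   literally tau-coassociativity and the whiskered normality conditions are
   normality; the vertical composites in the lax cocycle condition are the two
   sides of 2-cocyclicity precomposed with the isomorphism [I ≅ I ⊗ I], which
   can be cancelled. In particular no monoid or bimonoid axiom is needed. *)

Section MonVCells.
Variable C : BMC.

Lemma split_epi_cancel {a b c : ob C} {e : hom a b} {s : hom b a} {f g : hom b c} :
  e ∘ s = idm b -> f ∘ e = g ∘ e -> f = g.
Proof.
  intros es fg.
  rewrite <- (comp_idr f), <- (comp_idr g), <- es, !comp_assoc, fg.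
  reflexivity.
Qed.

Lemma eq_vcomp2 (N : mdata C) (zeta xi zeta' xi' : hom unit N) :
  vcomp2 zeta xi = vcomp2 zeta' xi' <-> bullet zeta xi = bullet zeta' xi'.
Proof.
  unfold vcomp2; split; intros E.
  - exact (split_epi_cancel (lunit_iso1 unit) E).
  - rewrite E; reflexivity.
Qed.

End MonVCells.

Theorem proposition4p5 (C : BMC) (A B : mdata C)
  (delta : hom (mcar B) (mcar B ⊗ mcar B)) (eps : hom (mcar B) unit)
  (HA : is_monoid A) (HB : is_bimonoid B delta eps)
  (gamma : hom (mcar A) (mcar A ⊗ mcar B))
  (tau : hom unit ((mcar A ⊗ mcar B) ⊗ mcar B)) :
  twisted_right_coaction A B delta eps gamma tau
  <-> normal_lax_right_coaction_MonV A B delta eps gamma tau.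
Proof.
  unfold twisted_right_coaction, normal_lax_right_coaction_MonV,
    is_2cell, whisk_cod, whisk_dom, tens2, id2.
  rewrite eq_vcomp2.
  tauto.
Qed.
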